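(* Let $K$ be a field and $\nu$ a valuation on $K[x]$. For all nonconstant $f,g\in K[x]$ we have $\epsilon(fg)=\max\{\epsilon(f),\epsilon(g)\}$.
   Context: $\nu:K[x]\to\Gamma\cup\{\infty\}$ is a valuation ($\Gamma$ an ordered abelian group) with $\nu(f)=\infty$ only for $f=0$; $\Gamma'=\Gamma\otimes\mathbb{Q}$ is the divisible hull. For $k\in\mathbb{N}$, $\partial_kf=\frac{1}{k!}\frac{d^kf}{dx^k}$ is the Hasse derivative. For nonconstant $f$, $\epsilon(f)=\max\{(\nu(f)-\nu(\partial_kf))/k\mid 1\le k\le\deg f,\ \partial_kf\neq0\}\in\Gamma'$. *)

From mathcomp Require Import all_boot all_order all_algebra.
Set Implicit Arguments. Unset Strict Implicit. Unset Printing Implicit Defensive.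
Import GRing.Theory.
Local Open Scope ring_scope.

Definition ordered_abelian_group (G : zmodType) (le : rel G) : Prop :=
  [/\ reflexive le, antisymmetric le, transitive le, total le &
      forall a b c : G, le a b -> le (a + c) (b + c)].

(* A valuation nu : K[x] -> G u {oo}, with nu f = oo iff f = 0.  We record
   only its (finite) values on nonzero polynomials; the value at 0 is oo by
   convention, so the axioms are stated for nonzero arguments (the ones
   involving 0 are automatic for oo). *)
Definition is_valuation (K : fieldType) (G : zmodType) (le : rel G)
    (nu : {poly K} -> G) : Prop :=
  (forall f g : {poly K}, f != 0 -> g != 0 -> nu (f * g) = nu f + nu g) /\
  (forall f g : {poly K}, f != 0 -> g != 0 -> f + g != 0 ->
      le (nu f) (nu (f + g)) || le (nu g) (nu (f + g))).

(* Elements of the divisible hull G (x) Q represented as fractions a / m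
   (m > 0), compared by cross-multiplication. *)
Definition frac_le (G : zmodType) (le : rel G) (x y : G * nat) : bool :=
  le (x.1 *+ y.2) (y.1 *+ x.2).
Definition frac_eq (G : zmodType) (le : rel G) (x y : G * nat) : bool :=
  frac_le le x y && frac_le le y x.
Definition frac_max (G : zmodType) (le : rel G) (x y : G * nat) : G * nat :=
  if frac_le le x y then y else x.

(* epsilon(f) = max { (nu f - nu (d_k f)) / k | 1 <= k <= deg f, d_k f != 0 },
   with d_k = nderivn k the Hasse derivative (p^`N(k)). *)
Definition epsilon (K : fieldType) (G : zmodType) (le : rel G)
    (nu : {poly K} -> G) (f : {poly K}) : G * nat :=
  let d := (size f).-1 in
  foldl (frac_max le) (nu f - nu (nderivn d f), d)
    [seq (nu f - nu (nderivn k f), k) | k <- iota 1 d & nderivn k f != 0].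

From mathcomp Require Import all_boot all_order all_algebra.
From mathcomp Require Import ring zify.
Set Implicit Arguments. Unset Strict Implicit. Unset Printing Implicit Defensive.
Import GRing.Theory.
Local Open Scope ring_scope.

(* Fix a candidate value e/m of epsilon.  Call h "slope bounded" if for
   every k with d_k h != 0 the weight  m nu(d_k h) + k e  is at least m nu(h),
   i.e. (nu h - nu d_k h)/k <= e/m, and call k "tight" for h if equality holds.
   Then eps h <= e/m iff h is slope bounded, and eps h >= e/m as soon as some
   k > 0 is tight for h.  With e/m = max(eps f, eps g):
   - by the Leibniz rule d_k(fg) = sum_i d_i f d_(k-i) g and the ultrametric
     inequality, fg is slope bounded, so eps(fg) <= e/m;
   - if i0, j0 are the largest tight indices of f and g, then in the Leibniz
     expansion of d_(i0+j0)(fg) the term d_i0 f d_j0 g has strictly smaller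
     valuation than every other term, so i0+j0 is tight for fg; taking f to be
     the factor realising the maximum gives i0 > 0, hence eps(fg) >= e/m. *)

Lemma nderivnMX (R : comNzRingType) (p : {poly R}) k :
  (p * 'X)^`N(k.+1) = p^`N(k.+1) * 'X + p^`N(k).
Proof. by have := nderivnMXaddC k p 0; rewrite addr0 addrC. Qed.

Lemma nderivnM (R : comNzRingType) (p q : {poly R}) k :
  (p * q)^`N(k) = \sum_(i < k.+1) p^`N(i) * q^`N(k - i).
Proof.
elim/poly_ind: q k => [|q c IH] k.
  by rewrite mulr0 linear0 big1 // => i _; rewrite linear0 mulr0.
case: k => [|k]; first by rewrite big_ord1 !nderivn0.
rewrite mulrDr mulrA nderivnD nderivnMX !IH.
rewrite [p * c%:P]mulrC mul_polyC nderivnZ -mul_polyC.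
rewrite !(@big_ord_recr _ _ _ k.+1) /= !subnn !nderivn0.
rewrite [X in _ = X + _](eq_bigr (fun i : 'I_k.+1 =>
    p^`N(i) * q^`N(k - i) + p^`N(i) * q^`N(k.+1 - i) * 'X)); last first.
  move=> i _; rewrite subSn; last by rewrite -ltnS.
  by rewrite nderivnMXaddC mulrDr mulrA.
rewrite big_split /= -mulr_suml.
ring.
Qed.

(* Elementary order arithmetic in an ordered abelian group given by an
   abstract relation [le]; x < y is written ~~ le y x. *)
Section OrderedGroup.
Variables (G : zmodType) (le : rel G).
Hypothesis hG : ordered_abelian_group le.

Lemma leG_refl a : le a a. Proof. by case: hG. Qed.

Lemma leG_trans a b c : le a b -> le b c -> le a c.
Proof. by case: hG => _ _ htr _ _; apply: htr. Qed.

Lemma leG_anti a b : le a b -> le b a -> a = b.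
Proof. by case: hG => _ hanti _ _ _ hab hba; apply: hanti; rewrite hab hba. Qed.

Lemma leG_total a b : le a b || le b a.
Proof. by case: hG => _ _ _ htot _; apply: htot. Qed.

Lemma leG_add2r a b c : le (a + c) (b + c) = le a b.
Proof.
case: hG => _ _ _ _ hadd; apply/idP/idP; last exact: hadd.
by move/(hadd _ _ (- c)); rewrite !addrK.
Qed.

Lemma leG_add2l a b c : le (c + a) (c + b) = le a b.
Proof. by rewrite ![c + _]addrC leG_add2r. Qed.

Lemma leG_add a b c d : le a b -> le c d -> le (a + c) (b + d).
Proof.
move=> hab hcd; apply: (@leG_trans _ (b + c)); by rewrite ?leG_add2r ?leG_add2l.
Qed.

Lemma ltG_leW a b : ~~ le b a -> le a b.
Proof. by move=> hba; have := leG_total a b; rewrite (negbTE hba) orbF. Qed.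

Lemma ltG_add a b c d : ~~ le b a -> le c d -> ~~ le (b + d) (a + c).
Proof.
move=> hab hcd; apply: contra hab => hle.
by rewrite -(leG_add2r _ _ c); apply: leG_trans hle; rewrite leG_add2l.
Qed.

Lemma leG_mulrn n a b : le a b -> le (a *+ n) (b *+ n).
Proof. by move=> hab; elim: n => [|n IH]; rewrite ?leG_refl // !mulrS leG_add. Qed.

Lemma ltG_mulrn n a b : (0 < n)%N -> ~~ le b a -> ~~ le (b *+ n) (a *+ n).
Proof.
case: n => // n _ hab; elim: n => [|n IH]; first by rewrite !mulr1n.
by rewrite mulrS [a *+ _]mulrS ltG_add // ltG_leW.
Qed.

Lemma leG_pmulrn n a b : (0 < n)%N -> le (a *+ n) (b *+ n) = le a b.
Proof.
move=> n0; apply/idP/idP; last exact: leG_mulrn.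
by apply: contraLR => /(ltG_mulrn n0).
Qed.

Lemma mulrn_injG n (a b : G) : (0 < n)%N -> a *+ n = b *+ n -> a = b.
Proof. by move=> n0 e; apply: leG_anti; rewrite -(leG_pmulrn _ _ n0) e leG_refl. Qed.

Lemma leG_subl x y z n : le ((x - y) *+ n) z = le (x *+ n) (y *+ n + z).
Proof. by rewrite -(leG_add2l _ _ (y *+ n)) mulrnBl addrC subrK. Qed.

Lemma leG_subr x y z n : le z ((x - y) *+ n) = le (y *+ n + z) (x *+ n).
Proof. by rewrite -(leG_add2l _ _ (y *+ n)) mulrnBl [_ + (_ - _)]addrC subrK. Qed.

Lemma frac_le_refl x : frac_le le x x. Proof. exact: leG_refl. Qed.

Lemma frac_le_trans x y z :
  (0 < y.2)%N -> frac_le le x y -> frac_le le y z -> frac_le le x z.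
Proof.
rewrite /frac_le => y0 hxy hyz; rewrite -(leG_pmulrn _ _ y0) mulrnAC.
apply: leG_trans (leG_mulrn z.2 hxy) _.
by rewrite [y.1 *+ _ *+ _]mulrnAC [z.1 *+ _ *+ _]mulrnAC leG_mulrn.
Qed.

Lemma frac_max_ge x y :
  frac_le le x (frac_max le x y) /\ frac_le le y (frac_max le x y).
Proof.
rewrite /frac_max; case: ifP => hxy; split=> //; rewrite ?frac_le_refl //.
by have := leG_total (x.1 *+ y.2) (y.1 *+ x.2); rewrite [le _ _]hxy.
Qed.

Lemma foldl_frac_max s l : all (fun z => 0 < z.2)%N (s :: l) ->
  foldl (frac_max le) s l \in s :: l /\
  forall z, z \in s :: l -> frac_le le z (foldl (frac_max le) s l).
Proof.
elim: l s => [|x l IH] s /=.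
  by move=> _; split=> [|z]; rewrite ?mem_head // inE => /eqP->; apply: frac_le_refl.
case/and3P=> s0 x0 l0.
have m0 : (0 < (frac_max le s x).2)%N by rewrite /frac_max; case: ifP.
have [IH1 IH2] := IH (frac_max le s x) (introT andP (conj m0 l0)).
have [Hs Hx] := frac_max_ge s x.
split.
  move: IH1; rewrite !inE => /orP[/eqP->|->]; last by rewrite !orbT.
  by rewrite /frac_max; case: ifP; rewrite eqxx ?orbT.
move=> z; rewrite !inE => /or3P [/eqP->|/eqP->|zl].
- exact: frac_le_trans m0 Hs (IH2 _ (mem_head _ _)).
- exact: frac_le_trans m0 Hx (IH2 _ (mem_head _ _)).
- by apply: IH2; rewrite inE zl orbT.
Qed.

Section Valuation.
Variables (K : fieldType) (nu : {poly K} -> G).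
Hypothesis hv : is_valuation le nu.

Lemma nuM f g : f != 0 -> g != 0 -> nu (f * g) = nu f + nu g.
Proof. by case: hv => hM _; apply: hM. Qed.

Lemma nuD f g : f != 0 -> g != 0 -> f + g != 0 ->
  le (nu f) (nu (f + g)) || le (nu g) (nu (f + g)).
Proof. by case: hv => _ hD; apply: hD. Qed.

Lemma nu1 : nu 1 = 0.
Proof.
apply: (addrI (nu 1)); rewrite addr0 -nuM ?oner_neq0 //.
by rewrite mulr1.
Qed.

Lemma nuN h : h != 0 -> nu (- h) = nu h.
Proof.
move=> hn; have n1 : (-1 : {poly K}) != 0 by rewrite oppr_eq0 oner_neq0.
have nuN1 : nu (-1) = 0.
  by apply: (@mulrn_injG 2) => //; rewrite mul0rn mulr2n -nuM // mulrNN mulr1 nu1.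
by rewrite -mulN1r nuM // nuN1 add0r.
Qed.

Definition up_closed (P : pred G) := forall a b, le a b -> P a -> P b.

(* Ultrametric inequality: for an up-closed property P of values, the set of
   polynomials that vanish or whose valuation satisfies P is closed under
   (finite) sums. *)
Lemma nu_add_up_closed (P : pred G) h1 h2 : up_closed P ->
  (h1 == 0) || P (nu h1) -> (h2 == 0) || P (nu h2) ->
  (h1 + h2 == 0) || P (nu (h1 + h2)).
Proof.
move=> hP; case: (eqVneq h1 0) => [->|n1] /=; first by rewrite add0r.
case: (eqVneq h2 0) => [->|n2] /=; first by rewrite addr0 orbC => ->.
case: (eqVneq (h1 + h2) 0) => [//|ns] /= P1 P2.
by case/orP: (nuD n1 n2 ns) => hle; [apply: hP P1 | apply: hP P2].
Qed.

Lemma nu_sum_up_closed (P : pred G) (I : Type) (r : seq I) (Pr : pred I)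
    (F : I -> {poly K}) :
  up_closed P -> (forall i, Pr i -> (F i == 0) || P (nu (F i))) ->
  (\sum_(i <- r | Pr i) F i == 0) || P (nu (\sum_(i <- r | Pr i) F i)).
Proof.
move=> hP hF; apply: (big_ind (fun h => (h == 0) || P (nu h))) => //.
- by rewrite eqxx.
- by move=> h1 h2; apply: nu_add_up_closed.
Qed.

Lemma nu_add_dominant t r : t != 0 -> (r == 0) || ~~ le (nu r) (nu t) ->
  t + r != 0 /\ nu (t + r) = nu t.
Proof.
move=> tn; case: (eqVneq r 0) => [->|rn] /=; first by rewrite addr0.
move=> lt_tr.
have sn : t + r != 0.
  apply/eqP=> e; move: lt_tr.
  have -> : r = - t by apply/eqP; rewrite -addr_eq0 addrC e.
  by rewrite nuN // leG_refl.
split=> //.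
have rn' : - r != 0 by rewrite oppr_eq0.
have := nuD sn rn'; rewrite addrK nuN // (negbTE lt_tr) orbF => /(_ tn) ge_t.
apply: leG_anti => //.
case/orP: (nuD tn rn sn) => // le_r.
by move: lt_tr; rewrite (leG_trans le_r ge_t).
Qed.

Definition slope (h : {poly K}) k : G * nat := (nu h - nu (h^`N(k)), k).

Lemma nderivn_neq0_lt (h : {poly K}) k : h^`N(k) != 0 -> (k < size h)%N.
Proof. by apply: contraR; rewrite -leqNgt => /nderivn_poly0 ->. Qed.

(* The top Hasse derivative of h is its (nonzero) leading coefficient. *)
Lemma nderivn_top_neq0 (h : {poly K}) : h != 0 -> h^`N((size h).-1) != 0.
Proof.
move=> hn; apply: contraNneq hn => /(congr1 (fun p : {poly K} => p`_0)).
by rewrite coef_nderivn addn0 binn mulr1n coef0 -lead_coefE => /eqP; rewrite lead_coef_eq0.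
Qed.

Lemma epsilon_spec (h : {poly K}) : (1 < size h)%N ->
  (exists k, [/\ (0 < k)%N, h^`N(k) != 0 & epsilon le nu h = slope h k]) /\
  forall k, (0 < k)%N -> h^`N(k) != 0 -> frac_le le (slope h k) (epsilon le nu h).
Proof.
move=> sh; have hn : h != 0 by rewrite -size_poly_gt0 (ltn_trans _ sh).
set d := (size h).-1.
have d0 : (0 < d)%N by rewrite /d -ltnS prednK // (ltn_trans _ sh).
set l := [seq slope h k | k <- iota 1 d & h^`N(k) != 0].
have pos : all (fun z : G * nat => (0 < z.2)%N) (slope h d :: l).
  rewrite /= d0 /=; apply/allP=> z /mapP [k]; rewrite mem_filter mem_iota.
  by case/andP=> _ /andP [k1 _] ->.
have [inl ge] := foldl_frac_max pos.
rewrite /epsilon -/d -/l; split.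
  move: inl; rewrite inE => /orP [/eqP ->|].
    by exists d; split=> //; apply: nderivn_top_neq0.
  case/mapP=> k; rewrite mem_filter mem_iota => /andP [nz /andP [k1 _]] ->.
  by exists k.
move=> k k0 nz; apply: ge; rewrite inE; apply/orP; right.
apply/mapP; exists k => //; rewrite mem_filter nz mem_iota k0 /= add1n.
by rewrite /d prednK ?(nderivn_neq0_lt nz) // (ltn_trans _ sh).
Qed.

Section SlopeBound.
Variables (e : G) (m : nat).

Definition weight (h : {poly K}) k := nu (h^`N(k)) *+ m + e *+ k.

Definition slope_bounded (h : {poly K}) :=
  forall k, h^`N(k) != 0 -> le (nu h *+ m) (weight h k).

Definition tight (h : {poly K}) k := (h^`N(k) != 0) && (weight h k == nu h *+ m).

Lemma slope_le_bound (h : {poly K}) k : frac_le le (slope h k) (e, m) = le (nu h *+ m) (weight h k).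
Proof. exact: leG_subl. Qed.

Lemma slope_ge_bound (h : {poly K}) k : frac_le le (e, m) (slope h k) = le (weight h k) (nu h *+ m).
Proof. exact: leG_subr. Qed.

Lemma epsilon_le_bound (h : {poly K}) : (1 < size h)%N ->
  frac_le le (epsilon le nu h) (e, m) <-> slope_bounded h.
Proof.
move=> sh; have [[k [k0 nz ek]] ge] := epsilon_spec sh.
split=> [le_eps [|i] nz'|bh].
- by rewrite /weight nderivn0 addr0 leG_refl.
- rewrite -slope_le_bound; apply: frac_le_trans _ (ge _ _ nz') le_eps => //.
  by rewrite ek.
- by rewrite ek slope_le_bound; apply: bh.
Qed.

Lemma tight_epsilon_ge (h : {poly K}) k : (1 < size h)%N -> (0 < k)%N -> tight h k ->
  frac_le le (e, m) (epsilon le nu h).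
Proof.
move=> sh k0 /andP [nz /eqP wk].
have [_ ge] := epsilon_spec sh.
apply: (frac_le_trans (y := slope h k)) k0 _ (ge _ k0 nz).
by rewrite slope_ge_bound wk leG_refl.
Qed.

Lemma epsilon_tight (h : {poly K}) : (1 < size h)%N -> epsilon le nu h = (e, m) ->
  exists2 k, (0 < k)%N & tight h k.
Proof.
move=> sh; have [[k [k0 nz ->]] _] := epsilon_spec sh.
case=> he hm; exists k => //.
by rewrite /tight /weight nz -he -hm mulrnBl addrC subrK eqxx.
Qed.

Lemma not_tight_gt (h : {poly K}) k : slope_bounded h -> h^`N(k) != 0 -> ~~ tight h k ->
  ~~ le (weight h k) (nu h *+ m).
Proof.
move=> bh nz; apply: contra => hle.
by rewrite /tight nz; apply/eqP/leG_anti => //; apply: bh.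
Qed.

Section Product.
Variables (f g : {poly K}).
Hypotheses (fn : f != 0) (gn : g != 0).
Hypotheses (bf : slope_bounded f) (bg : slope_bounded g).

Lemma weight_mul i j k : (i + j)%N = k -> f^`N(i) != 0 -> g^`N(j) != 0 ->
  nu (f^`N(i) * g^`N(j)) *+ m + e *+ k = weight f i + weight g j.
Proof. by move=> <- fi gj; rewrite nuM // mulrnDl mulrnDr addrACA. Qed.

Lemma weight_sum_gt i j : f^`N(i) != 0 -> g^`N(j) != 0 ->
  ~~ tight f i || ~~ tight g j ->
  ~~ le (weight f i + weight g j) (nu f *+ m + nu g *+ m).
Proof.
move=> fi gj /orP [nt|nt].
  by apply: ltG_add; [apply: not_tight_gt | apply: bg].
by rewrite addrC [nu f *+ m + _]addrC; apply: ltG_add; [apply: not_tight_gt | apply: bf].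
Qed.

Lemma slope_bounded_mul : slope_bounded (f * g).
Proof.
move=> k nz; pose P x := le (nu (f * g) *+ m) (x *+ m + e *+ k).
have Pup : up_closed P.
  by move=> a b hab Pa; apply: leG_trans Pa _; rewrite leG_add2r leG_mulrn.
have := @nu_sum_up_closed P _ (index_enum 'I_k.+1) xpredT
  (fun i : 'I_k.+1 => f^`N(i) * g^`N(k - i)) Pup.
rewrite -nderivnM (negbTE nz) /=; apply=> i _.
case: (eqVneq (f^`N(i)) 0) => [->|fi]; first by rewrite mul0r eqxx.
case: (eqVneq (g^`N(k - i)) 0) => [->|gj]; first by rewrite mulr0 eqxx.
have ik : (i + (k - i))%N = k by rewrite subnKC // -ltnS.
rewrite mulf_eq0 (negbTE fi) (negbTE gj) /P (weight_mul ik) //= nuM // mulrnDl.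
by apply: leG_add; [apply: bf | apply: bg].
Qed.

(* With i0, j0 the largest tight orders of f and g, the order i0 + j0 is
   tight for fg: the Leibniz term d_i0 f d_j0 g strictly dominates. *)
Lemma tight_mul_max i0 j0 : tight f i0 -> tight g j0 ->
  (forall i, tight f i -> i <= i0)%N -> (forall j, tight g j -> j <= j0)%N ->
  tight (f * g) (i0 + j0).
Proof.
move=> /andP [fi0 /eqP wf0] /andP [gj0 /eqP wg0] maxf maxg.
set k := (i0 + j0)%N.
have i0k : (i0 < k.+1)%N by rewrite ltnS leq_addr.
rewrite /tight /weight nderivnM (bigD1 (Ordinal i0k)) //= addKn.
set t := f^`N(i0) * g^`N(j0).
have tn : t != 0 by rewrite mulf_neq0.
have wt : nu t *+ m + e *+ k = nu f *+ m + nu g *+ m.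
  by rewrite (weight_mul erefl) // wf0 wg0.
set r := \sum_(i < k.+1 | i != Ordinal i0k) f^`N(i) * g^`N(k - i).
have dom : (r == 0) || ~~ le (nu r) (nu t).
  apply: (nu_sum_up_closed (P := fun x => ~~ le x (nu t))) => [a b hab|i ni].
    by apply: contra => hb; apply: leG_trans hab hb.
  case: (eqVneq (f^`N(i)) 0) => [->|fi]; first by rewrite mul0r eqxx.
  case: (eqVneq (g^`N(k - i)) 0) => [->|gj]; first by rewrite mulr0 eqxx.
  have ik : (i + (k - i))%N = k by rewrite subnKC // -ltnS.
  apply/orP; right; apply: contra (weight_sum_gt fi gj _) => [hle|].
    by rewrite -(weight_mul ik) // -wt leG_add2r leG_mulrn.
  have ne : (i != i0 :> nat) by apply: contraNneq ni => h; apply/eqP/val_inj.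
  case: (ltngtP i i0) ne => // [lt_i|gt_i] _.
    by apply/orP; right; apply/negP => /maxg; move: lt_i; rewrite /k; lia.
  by apply/orP; left; apply/negP => /maxf; move: gt_i; lia.
have [sn ->] := nu_add_dominant tn dom.
by rewrite sn wt nuM // mulrnDl eqxx.
Qed.

Lemma tight_mul i1 : (0 < i1)%N -> tight f i1 ->
  exists2 k, (0 < k)%N & tight (f * g) k.
Proof.
move=> i10 ti1.
have tg0 : tight g 0 by rewrite /tight /weight nderivn0 gn mulr0n addr0 eqxx.
have bdf i : tight f i -> (i <= size f)%N.
  by case/andP=> /nderivn_neq0_lt /ltnW.
have bdg j : tight g j -> (j <= size g)%N.
  by case/andP=> /nderivn_neq0_lt /ltnW.
have exf : exists i, tight f i by exists i1.
have exg : exists j, tight g j by exists 0%N.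
case: (ex_maxnP exf bdf) => i0 ti0 maxf.
case: (ex_maxnP exg bdg) => j0 tj0 maxg.
exists (i0 + j0)%N; last exact: tight_mul_max.
by rewrite (leq_trans i10) // (leq_trans (maxf _ ti1)) // leq_addr.
Qed.

End Product.
End SlopeBound.
End Valuation.
End OrderedGroup.

Theorem mainTheorem5 (K : fieldType) (G : zmodType) (le : rel G)
    (nu : {poly K} -> G) :
  ordered_abelian_group le -> is_valuation le nu ->
  forall f g : {poly K}, (1 < size f)%N -> (1 < size g)%N ->
    frac_eq le (epsilon le nu (f * g))
               (frac_max le (epsilon le nu f) (epsilon le nu g)).
Proof.
move=> hG hv f g sf sg.
have fn : f != 0 by rewrite -size_poly_gt0 (ltn_trans _ sf).
have gn : g != 0 by rewrite -size_poly_gt0 (ltn_trans _ sg).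
have sfg : (1 < size (f * g)%R)%N.
  by rewrite size_mul //; move: (size f) (size g) sf sg => a b; lia.
have [Mf Mg] := frac_max_ge hG (epsilon le nu f) (epsilon le nu g).
case E : (frac_max le _ _) Mf Mg => [e m] Mf Mg.
have bf := (epsilon_le_bound hG nu e m sf).1 Mf.
have bg := (epsilon_le_bound hG nu e m sg).1 Mg.
apply/andP; split.
  by apply/(epsilon_le_bound hG nu e m sfg); exact: slope_bounded_mul.
have [k k0 tk] : exists2 k, (0 < k)%N & tight nu e m (f * g) k.
  move: E; rewrite /frac_max; case: ifP => _.
  - move/(epsilon_tight hG sg) => [i i0 ti].
    by rewrite mulrC; apply: (tight_mul hG hv gn fn bg bf i0 ti).
  - move/(epsilon_tight hG sf) => [i i0 ti].
    exact: (tight_mul hG hv fn gn bf bg i0 ti).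
exact: (tight_epsilon_ge hG sfg k0 tk).
Qed.
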